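(* Let $B$ be a complete Boolean algebra. Then there is a partition of unity $I\subseteq B$ such that $B\cong\prod_{b\in I} B\upharpoonright b$ and $B\upharpoonright b$ is homogeneous in height for every $b\in I$. Moreover, $\mathfrak{h}(B\upharpoonright a)\neq \mathfrak{h}(B\upharpoonright b)$ whenever $a\neq b$ are in $I$.
   Context: For a partial order $(P,\leq)$, the height $\mathfrak{h}(P)$ is the minimal cardinality of a family of open dense subsets of $P$ whose intersection is not dense in $P$; if $P$ is atomic (there is a set of minimal elements such that every element lies above one of them) one sets $\mathfrak{h}(P)=\infty$. For a Boolean algebra $B$, $\mathfrak{h}(B)$ is the height of $(B\setminus\{0\},\leq)$. For $b\in B$, $B\upharpoonright b=\{x\in B: x\leq b\}$ is the relative algebra, and $\downarrow p=\{q\in P:q\leq p\}$. An ordering $P$ is homogeneous in height if $\mathfrak{h}(\downarrow p)=\mathfrak{h}(P)$ for every $p\in P$. A partition of unity is a set of pairwise disjoint nonzero elements whose join is $1$. *)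

(* Boolean algebras = ctbDistrLatticeType (complemented
   distributive lattices with top and bottom). Subsets are Prop predicates. *)
From mathcomp Require Import all_boot all_order.

Set Implicit Arguments.
Unset Strict Implicit.
Unset Printing Implicit Defensive.

Import Order.Theory.
Local Open Scope order_scope.

Section PosetNotions.
Variables (d : Order.disp_t) (T : porderType d).

(* All partial orders considered are subsets P of T with the induced order. *)

Definition dense_in (P D : T -> Prop) : Prop :=
  forall p, P p -> exists2 q, D q & q <= p.

Definition open_dense_in (P D : T -> Prop) : Prop :=
  [/\ (forall x, D x -> P x),
      (forall p q, D p -> P q -> q <= p -> D q)
    & dense_in P D].

Definition bigcap_in (P : T -> Prop) (F : (T -> Prop) -> Prop) : T -> Prop :=
  fun x => P x /\ forall D, F D -> D x.

Definition bad_family (P : T -> Prop) (F : (T -> Prop) -> Prop) : Prop :=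
  (forall D, F D -> open_dense_in P D) /\ ~ dense_in P (bigcap_in P F).

Definition minimal_in (P : T -> Prop) (a : T) : Prop :=
  P a /\ forall q, P q -> q <= a -> q = a.

Definition atomic (P : T -> Prop) : Prop :=
  exists A : T -> Prop, (forall a, A a -> minimal_in P a) /\
    forall p, P p -> exists2 a, A a & a <= p.

Definition card_le (X Y : (T -> Prop) -> Prop) : Prop :=
  exists f : {x | X x} -> {y | Y y}, injective f.

Definition equipotent (X Y : (T -> Prop) -> Prop) : Prop :=
  exists f : {x | X x} -> {y | Y y}, bijective f.

(* F witnesses the height of P: a bad family of minimal cardinality. *)
Definition min_bad_family (P : T -> Prop) (F : (T -> Prop) -> Prop) : Prop :=
  bad_family P F /\ forall G, bad_family P G -> card_le F G.

(* h(P) = h(Q), where h = infinity for atomic orders. *)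
Definition same_height (P Q : T -> Prop) : Prop :=
  (atomic P /\ atomic Q) \/
  [/\ ~ atomic P, ~ atomic Q &
      exists F G, [/\ min_bad_family P F, min_bad_family Q G & equipotent F G]].

Definition downset_in (P : T -> Prop) (p : T) : T -> Prop :=
  fun q => P q /\ q <= p.

Definition homogeneous_in_height (P : T -> Prop) : Prop :=
  forall p, P p -> same_height (downset_in P p) P.

Definition is_sup (S : T -> Prop) (s : T) : Prop :=
  (forall x, S x -> x <= s) /\ forall u, (forall x, S x -> x <= u) -> s <= u.

End PosetNotions.

Section BooleanNotions.
Variables (d : Order.disp_t) (B : ctbDistrLatticeType d).

(* (B restricted to b) \ {0}, the ordering whose height is h(B|b). *)
Definition nonzero_below (b : B) : B -> Prop :=
  fun x => x != \bot /\ x <= b.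

Definition partition_of_unity (I : B -> Prop) : Prop :=
  [/\ (forall b, I b -> b != \bot),
      (forall a b, I a -> I b -> a <> b -> a `&` b = \bot)
    & is_sup I \top].

(* B is isomorphic to the product of the relative algebras B|b, b in I
   (product ordered pointwise; an order isomorphism of Boolean algebras is
   a Boolean algebra isomorphism). *)
Definition product_iso (I : B -> Prop) : Prop :=
  exists phi : B -> (forall i : {b : B | I b}, {x : B | x <= sval i}),
    bijective phi /\
    forall x y, x <= y <-> forall i, sval (phi x i) <= sval (phi y i).

End BooleanNotions.

Definition complete_BA (d : Order.disp_t) (B : ctbDistrLatticeType d) : Prop :=
  forall S : B -> Prop, exists s, is_sup S s.

(* Height is antitone on nonzero elements, and below every nonzero [p] there is
   an [r] all of whose nonzero parts have height [h(p)]: take [r] witnessing that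
   the intersection of a bad family of minimal size is not dense, and restrict
   that family below them (if [B|p] has no bad family at all, [r = p]). Call [b]
   maximal uniform when it is the join of all elements whose nonzero parts all
   have height [h(b)]; this join again has that property. By completeness every
   nonzero element meets a maximal uniform one, two maximal uniform elements of
   equal height coincide, and distinct ones are disjoint; so they form a
   partition of unity, over which a complete algebra splits as a product. *)

From mathcomp Require Import all_boot all_order.
From mathcomp Require Import boolp classical_sets cardinality.
From Stdlib Require Import ClassicalEpsilon.

Set Implicit Arguments.
Unset Strict Implicit.
Unset Printing Implicit Defensive.
Import Order.Theory.

Section Cardinality.
Local Open Scope classical_set_scope.
Local Open Scope card_scope.
Variable V : Type.

Definition set_of_sig (A : set V) (x : {x | A x}) : A :=
  exist _ (sval x) (mem_set (svalP x)).
Definition sig_of_set (A : set V) (x : A) : {x | A x} :=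
  exist _ (sval x) (set_mem (svalP x)).

Lemma set_of_sigK (A : set V) : cancel (@set_of_sig A) (@sig_of_set A).
Proof. by case=> x Ax; exact: eq_exist. Qed.

Lemma sig_of_setK (A : set V) : cancel (@sig_of_set A) (@set_of_sig A).
Proof. by move=> x; apply: val_inj. Qed.

Lemma sig_card_leP (X Y : set V) :
  (exists f : {x | X x} -> {y | Y y}, injective f) <-> X #<= Y.
Proof.
split=> [[f fi]|/card_leP/injfunPex[f _ fi]].
  apply/card_leP/injfunPex; exists (@set_of_sig Y \o f \o @sig_of_set X) => // x y _ _ /=.
  by move/(can_inj (@set_of_sigK Y))/fi/(can_inj (@sig_of_setK X)).
exists (@sig_of_set Y \o f \o @set_of_sig X) => x y /= /(can_inj (@sig_of_setK Y)).
by move/fi; rewrite !in_setT => /(_ isT isT)/(can_inj (@set_of_sigK X)).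
Qed.

Lemma sig_card_eqP (X Y : set V) :
  (exists f : {x | X x} -> {y | Y y}, bijective f) <-> X #= Y.
Proof.
split=> [[f fb]|/card_bijP[f fb]].
  apply/card_bijP; exists (@set_of_sig Y \o f \o @sig_of_set X).
  apply: bij_comp; last exact: Bijective (@sig_of_setK X) (@set_of_sigK X).
  by apply: bij_comp fb; exact: Bijective (@set_of_sigK Y) (@sig_of_setK Y).
exists (@sig_of_set Y \o f \o @set_of_sig X).
apply: bij_comp; last exact: Bijective (@set_of_sigK X) (@sig_of_setK X).
by apply: bij_comp fb; exact: Bijective (@sig_of_setK Y) (@set_of_sigK Y).
Qed.

Lemma card_le_minimum (C : set (set V)) :
  C !=set0 -> exists2 X, C X & forall Y, C Y -> X #<= Y.
Proof.
(* Zorn gives a maximal set of threads through [C] that is injective in each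
   coordinate; maximality makes it onto some coordinate [X0], which therefore
   injects into every other coordinate. *)
move=> [X1 CX1].
pose thread (z : set V -> V) := forall X, C X -> X (z X).
pose coherent (Z : set (set V -> V)) := (forall z, Z z -> thread z) /\
  forall X, C X -> forall z1 z2, Z z1 -> Z z2 -> z1 X = z2 X -> z1 = z2.
have [Z [[Zthread Zinj] Zmax]] : exists Z, coherent Z /\ forall Z', Z `<` Z' -> ~ coherent Z'.
  apply: Zorn_bigcup => F Fcoh Ftot; split=> [z [Z FZ Zz]|X CX z1 z2 [Z1 FZ1 Z1z] [Z2 FZ2 Z2z]].
    exact: (Fcoh _ FZ).1.
  have [Z12|Z21] := Ftot _ _ FZ1 FZ2.
    by apply: (Fcoh _ FZ2).2 => //; exact: Z12.
  by apply: (Fcoh _ FZ1).2 => //; exact: Z21.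
have [X0 CX0 Zonto] : exists2 X0, C X0 & forall x, X0 x -> exists2 z, Z z & z X0 = x.
  apply: contrapT => noX0.
  have fresh X : C X -> exists x, X x /\ ~ exists2 z, Z z & z X = x.
    move=> CX; apply: contra_notP noX0 => nofresh; exists X => // x Xx.
    by apply: contra_notP nofresh => nx; exists x.
  have [x1 _] := fresh X1 CX1.
  pose t X := epsilon (inhabits x1) (fun x => X x /\ ~ exists2 z, Z z & z X = x).
  have tP X : C X -> X (t X) /\ ~ exists2 z, Z z & z X = t X.
    by move=> CX; exact: epsilon_spec (fresh X CX).
  apply: (Zmax (Z `|` [set t])); last split.
  - split; first exact: subsetUl.
    by move/(_ t (or_intror erefl)) => Zt; apply: (tP X1 CX1).2; exists t.
  - by move=> z [/Zthread //|-> X /tP[]].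
  move=> X CX z1 z2 [Zz1|->] [Zz2|->] //; first exact: Zinj.
    by move=> e; case: (tP X CX).2; exists z1.
  by move=> e; case: (tP X CX).2; exists z2.
exists X0 => // Y CY; apply/sig_card_leP.
pose pick (x : {x | X0 x}) := cid2 (Zonto _ (svalP x)).
exists (fun x => exist _ (sval (pick x) Y) (Zthread _ (s2valP (pick x)) _ CY)).
move=> [x1 h1] [x2 h2] /(congr1 sval) /=.
case: (pick _) => [z1 Zz1 e1]; case: (pick _) => [z2 Zz2 e2] /= e.
apply: eq_exist; rewrite /= in e1 e2; rewrite -e1 -e2; congr (_ X0); exact: Zinj CY _ _ Zz1 Zz2 e.
Qed.

End Cardinality.

Local Open Scope order_scope.

Section Height.
Variables (d : Order.disp_t) (T : porderType d).
Implicit Types (P Q R : T -> Prop) (F G : (T -> Prop) -> Prop).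

Lemma bad_family_open_dense P : ~ atomic P -> bad_family P (open_dense_in P).
Proof.
move=> nP; split=> // Idense; apply: nP.
exists (bigcap_in P (open_dense_in P)); split; last first.
  by move=> p Pp; have [q Iq qp] := Idense p Pp; exists q.
move=> x [Px Ix]; split=> // y Py yx; apply: contrapT => nyx.
(* the elements not above [x] form an open dense set that misses [x] *)
have [] : P x /\ ~ x <= x; last by [].
apply: (Ix (fun z => P z /\ ~ x <= z)); split; first by move=> z [].
  by move=> p q [Pp xp] Pq qp; split=> // xq; apply: xp; exact: le_trans xq qp.
move=> p Pp; case: (boolP (x <= p)) => xp; last by exists p => //; split=> //; apply/negP.
exists y; last exact: le_trans yx xp.
by split=> // xy; apply: nyx; apply: le_anti; rewrite yx xy.
Qed.

Lemma atomic_bad_family P F : atomic P -> ~ bad_family P F.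
Proof.
move=> [A [Amin Adense]] [Fod]; apply.
move=> p Pp; have [a Aa ap] := Adense p Pp; have [Pa amin] := Amin a Aa.
exists a => //; split=> // D FD; have [DP _ Ddense] := Fod D FD.
by have [q Dq qa] := Ddense a Pa; rewrite -(amin q (DP q Dq) qa).
Qed.

Lemma atomicE P : atomic P <-> forall F, ~ bad_family P F.
Proof.
split=> [aP F|noF]; first exact: atomic_bad_family.
by apply: contrapT => nP; exact: noF _ (bad_family_open_dense nP).
Qed.

Lemma bad_family_witness P F : bad_family P F ->
  exists2 r, P r & forall t, bigcap_in P F t -> ~ t <= r.
Proof.
move=> [_ nd]; apply: contrapT => nr; apply: nd => r Pr; apply: contrapT => nt.
by apply: nr; exists r => // t It tr; apply: nt; exists t.
Qed.

Lemma min_bad_family_exists P F : bad_family P F -> exists G, min_bad_family P G.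
Proof.
move=> bF; have [G bG Gmin] := card_le_minimum (ex_intro _ F bF).
by exists G; split=> // H /Gmin /sig_card_leP.
Qed.

(* [h(P) <= h(Q)]; atomic orders, of height infinity, have no bad families. *)
Definition height_le P Q := forall G, bad_family Q G ->
  exists2 F, bad_family P F & (F #<= G)%card.

Lemma height_le_trans P Q R : height_le P Q -> height_le Q R -> height_le P R.
Proof.
move=> PQ QR H bH; have [G bG GH] := QR H bH; have [F bF FG] := PQ G bG.
by exists F => //; exact: card_le_trans FG GH.
Qed.

Lemma min_bad_family_le P F G : min_bad_family P F -> bad_family P G -> (F #<= G)%card.
Proof. by move=> [_ Fmin] /Fmin /sig_card_leP. Qed.

Lemma same_heightE P Q : same_height P Q <-> height_le P Q /\ height_le Q P.
Proof.
split=> [[[/atomicE aP /atomicE aQ]|[_ _ [F [G [mF mG /sig_card_eqP FG]]]]]|[PQ QP]].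
- by split=> H /[dup] bH; [move/aQ | move/aP].
- move: FG; rewrite card_eq_le => /andP[FG GF]; split=> H bH.
    by exists F; [exact: mF.1 | exact: card_le_trans FG (min_bad_family_le mG bH)].
  by exists G; [exact: mG.1 | exact: card_le_trans GF (min_bad_family_le mF bH)].
have [aP|nP] := pselect (atomic P).
  left; split=> //; apply/atomicE => G bG.
  by have [F bF _] := PQ G bG; exact: (atomic_bad_family aP bF).
have [F0 bF0] : exists F, bad_family P F by exists (open_dense_in P); exact: bad_family_open_dense.
have [G0 bG0 _] := QP F0 bF0.
have [[F mF] [G mG]] := (min_bad_family_exists bF0, min_bad_family_exists bG0).
right; split=> //; first by move/atomicE; apply; exact: bG0.
exists F, G; split=> //; apply/sig_card_eqP/Cantor_Bernstein.
  by have [F' bF' F'G] := PQ G mG.1; exact: card_le_trans (min_bad_family_le mF bF') F'G.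
by have [G' bG' G'F] := QP F mF.1; exact: card_le_trans (min_bad_family_le mG bG') G'F.
Qed.

Lemma same_height_sym P Q : same_height P Q -> same_height Q P.
Proof. by rewrite !same_heightE => -[]. Qed.

Lemma same_height_trans P Q R : same_height P Q -> same_height Q R -> same_height P R.
Proof.
rewrite !same_heightE => -[PQ QP] [QR RQ].
by split; [exact: height_le_trans QR | exact: height_le_trans QP].
Qed.

End Height.

Section BooleanHeight.
Variables (d : Order.disp_t) (B : ctbDistrLatticeType d).
Implicit Types (a b p q r s x y z u : B) (S : B -> Prop) (F G : (B -> Prop) -> Prop).

Local Notation height_le_below p q := (height_le (nonzero_below p) (nonzero_below q)).
Local Notation same_height_below p q :=
  (same_height (nonzero_below p) (nonzero_below q)).

Lemma downset_nonzero_below b p :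
  p <= b -> downset_in (nonzero_below b) p = nonzero_below p.
Proof.
move=> pb; apply/funext => x; apply/propext; split=> [[[x0 _] xp]|[x0 xp]] //.
by split=> //; split=> //; exact: le_trans xp pb.
Qed.

Lemma is_sup_meet_le S s a u :
  is_sup S s -> (forall x, S x -> a `&` x <= u) -> a `&` s <= u.
Proof.
move=> [_ s_lub] aSu.
have s_le : s <= u `|` ~` a.
  apply: s_lub => x Sx.
  have x_le : x <= (x `&` a) `|` ~` a by rewrite joinIl joinxC meetx1 leUl.
  apply: le_trans x_le _; rewrite leUx leUr andbT meetC.
  exact: le_trans (aSu x Sx) (leUl _ _).
apply: le_trans (leI2 (lexx a) s_le) _; rewrite meetUr meetxC joinx0; exact: leIr.
Qed.

Lemma is_sup_meet_neq0 S s a :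
  is_sup S s -> a <= s -> a != \bot -> exists2 x, S x & a `&` x != \bot.
Proof.
move=> s_sup a_s a0; apply: contrapT => noS; move: a0; apply/negP; rewrite negbK.
rewrite -(meet_idPl a_s) -lex0; apply: is_sup_meet_le s_sup _ => x Sx.
by apply: contrapT => /negP ax; apply: noS; exists x; rewrite // -lex0.
Qed.

Lemma height_le_le p q : q <= p -> height_le_below p q.
Proof.
move=> qp G bG; have [r [r0 rq] rW] := bad_family_witness bG.
pose ext D y := nonzero_below p y /\ (y `&` q = \bot \/ D y).
exists (ext @` G)%classic; last exact: card_image_le.
split.
  move=> _ [D GD <-]; have [DP Dopen Ddense] := bG.1 D GD; split.
  - by move=> y [].
  - move=> y z [_ [yq|Dy]] pz zy; split=> //; [left | right].
      by apply/eqP; rewrite -lex0 -yq leI2.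
    have [_ yq] := DP y Dy; have [z0 _] := pz.
    exact: Dopen Dy (conj z0 (le_trans zy yq)) zy.
  move=> y [y0 yp]; have [yq|yq] := eqVneq (y `&` q) \bot.
    by exists y => //; split=> //; left.
  have [t Dt ty] := Ddense _ (conj yq (leIr _ _)); have [t0 tq] := DP t Dt.
  exists t; last exact: le_trans ty (leIl _ _).
  by split; [split=> //; exact: le_trans tq qp | right].
move=> /(_ r (conj r0 (le_trans rq qp))) [t [[t0 _] It] tr].
have tq := le_trans tr rq; apply: (rW t) => //; split=> // D GD.
have [_ [|//]] := It (ext D) (ex_intro2 _ _ D GD erefl).
by rewrite (meet_idPl tq) => /eqP; rewrite (negPf t0).
Qed.

Lemma bad_family_restrict p r q F :
  bad_family (nonzero_below p) F -> nonzero_below p r ->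
  (forall t, bigcap_in (nonzero_below p) F t -> ~ t <= r) ->
  q <= r -> q != \bot ->
  exists2 F', bad_family (nonzero_below q) F' & (F' #<= F)%card.
Proof.
move=> bF [_ rp] rW qr q0; have qp := le_trans qr rp.
pose res D y := D y /\ y <= q.
exists (res @` F)%classic; last exact: card_image_le.
split.
  move=> _ [D FD <-]; have [DP Dopen Ddense] := bF.1 D FD; split.
  - by move=> y [/DP[y0 _] yq].
  - move=> y z [Dy _] [z0 zq] zy; split=> //; apply: Dopen Dy _ zy.
    by split=> //; exact: le_trans zq qp.
  move=> y [y0 yq]; have [t Dt ty] := Ddense y (conj y0 (le_trans yq qp)).
  by exists t => //; split=> //; exact: le_trans ty yq.
move=> /(_ q (conj q0 (lexx q))) [t [[t0 tq] It] _].
apply: (rW t); last exact: le_trans tq qr.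
split; first by split=> //; exact: le_trans tq qp.
by move=> D FD; case: (It (res D) (ex_intro2 _ _ D FD erefl)).
Qed.

Lemma height_le_of_below x r :
  (forall s, s != \bot -> s <= r ->
     exists w, [/\ w != \bot, w <= s & height_le_below x w]) ->
  height_le_below x r.
Proof.
move=> below G bG; have [s [s0 sr] sW] := bad_family_witness bG.
have [w [w0 ws xw]] := below s s0 sr.
have [F' bF' F'G] := bad_family_restrict bG (conj s0 sr) sW ws w0.
by have [F bF FF'] := xw F' bF'; exists F => //; exact: card_le_trans FF' F'G.
Qed.

Definition uniform_height x y := forall z, z != \bot -> z <= y -> same_height_below z x.

Lemma uniform_height_shift x x' y :
  same_height_below x x' -> uniform_height x y -> uniform_height x' y.
Proof. by move=> xx' xy z z0 zy; exact: same_height_trans (xy z z0 zy) xx'. Qed.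

Lemma uniform_height_self x y : y != \bot -> uniform_height x y -> uniform_height y y.
Proof. by move=> y0 xy; exact: uniform_height_shift (same_height_sym (xy y y0 (lexx y))) xy. Qed.

Lemma exists_uniform_below p :
  p != \bot -> exists r, [/\ r != \bot, r <= p & uniform_height p r].
Proof.
move=> p0; have [[F bF]|noF] := pselect (exists F, bad_family (nonzero_below p) F); last first.
  exists p; split=> // z z0 zp; apply/same_heightE; split; last exact: height_le_le.
  by move=> G bG; case: noF; exists G.
have [G mG] := min_bad_family_exists bF; have [r [r0 rp] rW] := bad_family_witness mG.1.
(* restricting a minimal bad family of [p] below any nonzero [z <= r] keeps it bad *)
exists r; split=> // z z0 zr; apply/same_heightE; split; last exact: height_le_le (le_trans zr rp).
move=> H bH; have [G' bG' G'G] := bad_family_restrict mG.1 (conj r0 rp) rW zr z0.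
by exists G' => //; exact: card_le_trans G'G (min_bad_family_le mG bH).
Qed.

Lemma uniform_height_sup x s : is_sup (uniform_height x) s -> uniform_height x s.
Proof.
move=> s_sup z z0 zs.
have below w : w != \bot -> w <= s ->
    exists v, [/\ v != \bot, v <= w & same_height_below v x].
  move=> w0 ws; have [y xy wy0] := is_sup_meet_neq0 s_sup ws w0.
  by exists (w `&` y); split=> //; [exact: leIl | exact: xy _ wy0 (leIr _ _)].
have [v [_ vz /same_heightE[vx _]]] := below z z0 zs.
apply/same_heightE; split; first exact: height_le_trans (height_le_le vz) vx.
apply: height_le_of_below => w w0 wz.
have [v' [v'0 v'w /same_heightE[_ xv']]] := below w w0 (le_trans wz zs).
by exists v'.
Qed.

Definition maximal_uniform b := b != \bot /\ is_sup (uniform_height b) b.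

Lemma maximal_uniform_homogeneous b :
  maximal_uniform b -> homogeneous_in_height (nonzero_below b).
Proof.
move=> [_ b_sup] p [p0 pb]; rewrite downset_nonzero_below //.
exact: uniform_height_sup b_sup p p0 pb.
Qed.

Lemma maximal_uniform_eq a b :
  maximal_uniform a -> maximal_uniform b -> same_height_below a b -> a = b.
Proof.
move=> [_ [a_ub a_lub]] [_ [b_ub b_lub]] ab; apply/le_anti/andP; split.
  by apply: a_lub => y /(uniform_height_shift ab); exact: b_ub.
by apply: b_lub => y /(uniform_height_shift (same_height_sym ab)); exact: a_ub.
Qed.

Lemma maximal_uniform_disjoint a b :
  maximal_uniform a -> maximal_uniform b -> a <> b -> a `&` b = \bot.
Proof.
move=> ma mb ab; apply/eqP; apply: contrapT => /negP ab0; apply: ab.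
have [aa bb] := (uniform_height_sup ma.2, uniform_height_sup mb.2).
apply: maximal_uniform_eq ma mb _.
exact: same_height_trans (same_height_sym (aa _ ab0 (leIl _ _))) (bb _ ab0 (leIr _ _)).
Qed.

Hypothesis B_complete : complete_BA B.

Lemma partition_product_iso (I : B -> Prop) : partition_of_unity I -> product_iso I.
Proof.
move=> [_ I_disj I_sup].
have sval_inj : injective (@sval B I) by move=> [x ?] [y ?] /= xy; exact: eq_exist.
have partition_le x y : (forall i, I i -> x `&` i <= y) -> x <= y.
  by move=> xy; rewrite -[x]meetx1; exact: is_sup_meet_le I_sup xy.
pose phi x (i : {b | I b}) : {y | y <= sval i} := exist _ (x `&` sval i) (leIr _ _).
have phi_mono x y : x <= y <-> forall i, sval (phi x i) <= sval (phi y i).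
  split=> [xy i|xy]; first exact: leI2.
  by apply: partition_le => i Ii; exact: le_trans (xy (exist _ i Ii)) (leIl _ _).
exists phi; split=> //.
pose psi (g : forall i : {b | I b}, {y | y <= sval i}) :=
  sval (cid (B_complete (fun z => exists i, z = sval (g i)))).
have psi_sup g : is_sup (fun z => exists i, z = sval (g i)) (psi g) by exact: svalP (cid _).
exists psi => [x|g].
  apply: le_anti; have [ub lub] := psi_sup (phi x); apply/andP; split.
    by apply: lub => _ [i ->]; exact: leIl.
  by apply: partition_le => i Ii; apply: ub; exists (exist _ i Ii).
apply: functional_extensionality_dep => i; apply: val_inj => /=.
have [ub _] := psi_sup g; apply: le_anti; rewrite lexI ub ?(svalP (g i)) ?andbT; last by exists i.
rewrite meetC; apply: is_sup_meet_le (psi_sup g) _ => _ [j ->].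
have [-> | ji] := pselect (j = i); first exact: leIr.
have ij0 : sval i `&` sval j = \bot.
  by apply: I_disj (svalP i) (svalP j) _ => /sval_inj ij; apply: ji.
by apply: le_trans (leI2 (lexx _) (svalP (g j))) _; rewrite ij0 le0x.
Qed.

Lemma maximal_uniform_above r :
  r != \bot -> uniform_height r r -> exists2 b, maximal_uniform b & r <= b.
Proof.
move=> r0 rr; have [b [b_ub b_lub]] := B_complete (uniform_height r).
have rb := b_ub r rr; have rb_unif := uniform_height_sup (conj b_ub b_lub).
have b0 : b != \bot by apply: contraNneq r0 => b0; rewrite -lex0 -b0.
have br := rb_unif b b0 (lexx b).
exists b => //; split=> //; split=> [y /(uniform_height_shift br)|u ub]; first exact: b_ub.
by apply: b_lub => y /(uniform_height_shift (same_height_sym br)); exact: ub.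
Qed.

Lemma maximal_uniform_sup_top : is_sup maximal_uniform \top.
Proof.
split=> [b _|u ub]; first exact: lex1.
have [u0|u0] := eqVneq (~` u) \bot; first by rewrite -(complK u) u0 compl0.
have [r [r0 ru ur]] := exists_uniform_below u0.
have [b mb rb] := maximal_uniform_above r0 (uniform_height_self r0 ur).
have r_u : r <= u := le_trans rb (ub b mb).
by move: r0; rewrite -lex0 -(meetxC u) lexI r_u ru.
Qed.

End BooleanHeight.

Theorem mainTheorem1 (d : Order.disp_t) (B : ctbDistrLatticeType d) :
  complete_BA B ->
  exists I : B -> Prop,
    [/\ partition_of_unity I,
        product_iso I,
        (forall b, I b -> homogeneous_in_height (nonzero_below b))
      & (forall a b, I a -> I b -> a <> b ->
           ~ same_height (nonzero_below a) (nonzero_below b))].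
Proof.
move=> B_complete.
have I_part : partition_of_unity (@maximal_uniform d B).
  split; [by move=> b [] | exact: maximal_uniform_disjoint | exact: maximal_uniform_sup_top].
exists (@maximal_uniform d B); split=> //.
- exact: partition_product_iso.
- exact: maximal_uniform_homogeneous.
- by move=> a b ma mb ab /(maximal_uniform_eq ma mb).
Qed.
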